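(* For every base $b\ge 2$ there exist infinitely many $b$-wMRH numbers, and infinitely many distinct integers $A\ge 0$ that occur as multiplicative extra terms of some $b$-wMRH number.
   Context: Fix a base $b\ge 2$. $s_b(N)$ is the sum of the base-$b$ digits of $N$. For a positive integer $X$, its reversal $X^R$ is the integer whose base-$b$ representation is that of $X$ written in reverse order (leading zeros of the result are dropped). A positive integer $N$ is a $b$-wMRH number if there exists an integer $A\ge 0$, called a multiplicative extra term of $N$, such that $N=(A+s_b(N))\cdot(A+s_b(N))^R$. *)

From mathcomp Require Import all_boot.
Set Implicit Arguments. Unset Strict Implicit. Unset Printing Implicit Defensive.

(* Base-b digits of n, least significant first (empty list for n = 0).
   Fuel n suffices since n %/ b < n for b >= 2, n > 0. *)
Fixpoint digits_aux (b fuel n : nat) : seq nat :=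
  match fuel with
  | 0 => [::]
  | fuel'.+1 => if n == 0 then [::] else n %% b :: digits_aux b fuel' (n %/ b)
  end.

Definition digits (b n : nat) : seq nat := digits_aux b n n.

Definition digsum (b n : nat) : nat := sumn (digits b n).

(* X^R: the integer whose base-b representation is that of X reversed;
   i.e. reading the little-endian digit list as a big-endian one
   (leading zeros of the result are automatically dropped). *)
Definition rev_num (b n : nat) : nat :=
  foldl (fun acc d => acc * b + d) 0 (digits b n).

Definition mult_extra_term (b N A : nat) : Prop :=
  N = (A + digsum b N) * rev_num b (A + digsum b N).

Definition wMRH (b N : nat) : Prop :=
  0 < N /\ exists A : nat, mult_extra_term b N A.

Example ex1 : digits 10 1230 = [:: 0; 3; 2; 1]. Proof. by []. Qed.
Example ex2 : rev_num 10 1230 = 321. Proof. by []. Qed.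
Example ex3 : digsum 2 6 = 2. Proof. by []. Qed.

From mathcomp Require Import all_boot.

(* Every power N = b ^ k of the base is a b-wMRH number, with multiplicative
   extra term A = b ^ k - 1.  Indeed the base-b expansion of b ^ k is a 1
   followed by k zeros, so s_b(b ^ k) = 1 and (b ^ k)^R = 1; hence
   A + s_b(N) = b ^ k and (A + s_b(N)) * (A + s_b(N))^R = b ^ k = N. *)

Section PowersOfTheBase.

Variable b : nat.
Hypothesis hb : 2 <= b.

Lemma digits_aux_pow (k fuel : nat) :
  k < fuel -> digits_aux b fuel (b ^ k) = nseq k 0 ++ [:: 1].
Proof.
case: b hb => [|[|b']] // _.
elim: k fuel => [|k IHk] [|fuel] //= lt_k_fuel.
  by rewrite expn0 /= modn_small // divn_small //; case: fuel {lt_k_fuel}.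
by rewrite expnS muln_eq0 expn_eq0 /= modnMr mulKn ?IHk.
Qed.

(* The fuel b ^ k used by [digits] suffices, since k < b ^ k. *)
Lemma digits_pow (k : nat) : digits b (b ^ k) = nseq k 0 ++ [:: 1].
Proof. by rewrite /digits digits_aux_pow // ltn_expl. Qed.

Lemma digsum_pow (k : nat) : digsum b (b ^ k) = 1.
Proof. by rewrite /digsum digits_pow sumn_cat sumn_nseq mul0n. Qed.

(* Reading the digits backwards, the leading zeros vanish: (b ^ k)^R = 1. *)
Lemma rev_num_pow (k : nat) : rev_num b (b ^ k) = 1.
Proof.
rewrite /rev_num digits_pow foldl_cat.
by have -> : foldl (fun acc d => acc * b + d) 0 (nseq k 0) = 0 by elim: k.
Qed.

Lemma pow_gt0 (k : nat) : 0 < b ^ k.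
Proof. by rewrite expn_gt0 (ltnW hb). Qed.

Lemma pow_mult_extra_term (k : nat) : mult_extra_term b (b ^ k) (b ^ k - 1).
Proof. by rewrite /mult_extra_term digsum_pow subnK ?pow_gt0 // rev_num_pow muln1. Qed.

Lemma pow_wMRH (k : nat) : wMRH b (b ^ k).
Proof. by split; [exact: pow_gt0 | exists (b ^ k - 1); exact: pow_mult_extra_term]. Qed.

End PowersOfTheBase.

Theorem proposition17 (b : nat) (hb : 2 <= b) :
  (forall m : nat, exists N : nat, m < N /\ wMRH b N) /\
  (forall m : nat, exists A : nat, m < A /\ exists N : nat, wMRH b N /\ mult_extra_term b N A).
Proof.
have large_pow (m : nat) : m.+1 < b ^ m.+1 by rewrite ltn_expl.
split=> m.
  exists (b ^ m.+1); split; first exact: ltn_trans (large_pow m).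
  exact: pow_wMRH.
exists (b ^ m.+1 - 1); split; first by rewrite ltn_subRL add1n.
by exists (b ^ m.+1); split; [exact: pow_wMRH | exact: pow_mult_extra_term].
Qed.
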